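(* If $\mathcal{A}$ is a $(\kappa,\beta)$-single-parameter family of $k$-swap local search heuristics for an object assignment problem with $n$ objects, and $\mathrm{cost}(A,x)$ is the objective value of the solution output by $A$ on $x$, then the pseudo-dimension of $\mathcal{A}$ is $O(k\log(\kappa\beta n))$.
   Context: Object assignment problem: an instance is $n$ objects with attributes, and a feasible solution assigns each object a value in a finite set $R$ subject to feasibility constraints; an initial feasible solution is given. A $k$-swap local search heuristic: starting from a feasible solution, while the current solution is not locally optimal, compute a score $\sigma(\{\xi_i:i\in K\})$ for each set $K$ of $k$ objects ($\xi_i$ the current attribute of $i$), take the set $K$ with highest score (ties broken lexicographically), and use an assignment rule to reassign each $i\in K$ a value in $R$, updating attributes of objects as necessary; the assignment rule maintains feasibility and the procedure terminates. A single-parameter family of scoring rules $\sigma(\rho,\cdot)$, $\rho$ in an interval $I$, continuous in $\rho$, is $\kappa$-crossing if for every subset $K$ of at most $k$ objects and every pair of distinct attribute sets $\xi_K\neq\xi'_K$, there are at most $\kappa$ values of $\rho$ with $\sigma(\rho,\xi_K)=\sigma(\rho,\xi'_K)$. An assignment rule is $\beta$-bounded if for every subset $K$ of at most $k$ objects, over all possible trajectories, the attribute set of $K$ takes at most $\beta$ distinct values. A $(\kappa,\beta)$-single-parameter family couples such scoring rules with a fixed such assignment rule. Pseudo-dimension: a finite set $\{x_1,\dots,x_m\}$ is shattered by a class $\mathcal{H}$ of real functions if there exist reals $r_i$ such that for every $T\subseteq\{1,\dots,m\}$ some $h\in\mathcal{H}$ has $h(x_i)>r_i\iff i\in T$; the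 pseudo-dimension is the largest size of a shattered set. *)

From Stdlib Require Import Reals.
From mathcomp Require Import all_boot.

Set Implicit Arguments.
Unset Strict Implicit.
Unset Printing Implicit Defensive.

(* All k-element sub-lists of l, in lexicographic order when l is sorted. *)
Fixpoint ksubs (T : Type) (l : seq T) (k : nat) : seq (seq T) :=
  match l with
  | [::] => if k is 0 then [:: [::]] else [::]
  | x :: l' => if k is k'.+1 then map (cons x) (ksubs l' k') ++ ksubs l' k
               else [:: [::]]
  end.

Definition first_argmax (T : Type) (f : T -> R) (x0 : T) (s : seq T) : T :=
  foldl (fun b y => if Rlt_dec (f b) (f y) then y else b) x0 s.

Definition is_interval (I : R -> Prop) : Prop :=
  forall a b c : R, I a -> I b -> Rle a c /\ Rle c b -> I c.

Section LocalSearch.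
Variables (X : Type) (n : nat) (V : finType) (A : eqType).
(* attr x s i : current attribute xi_i of object i in instance x under solution s *)
Variable attr : X -> {ffun 'I_n -> V} -> 'I_n -> A.
(* score rule sigma(rho, .) applied to the (multi)set of attributes of K *)
Variable sigma : R -> seq A -> R.
(* assignment rule: reassigns the objects of K *)
Variable rule : X -> {set 'I_n} -> {ffun 'I_n -> V} -> {ffun 'I_n -> V}.
Variable init : X -> {ffun 'I_n -> V}.
Variable locopt : X -> {ffun 'I_n -> V} -> bool.
Variable k : nat.

Definition score (rho : R) (x : X) (s : {ffun 'I_n -> V}) (K : seq 'I_n) : R :=
  sigma rho (map (attr x s) K).

(* the set K of k objects with highest score, ties broken lexicographically *)
Definition chosen (rho : R) (x : X) (s : {ffun 'I_n -> V}) : seq 'I_n :=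
  match ksubs (enum 'I_n) k with
  | [::] => [::]
  | K0 :: Ks => first_argmax (score rho x s) K0 Ks
  end.

Definition step (rho : R) (x : X) (s : {ffun 'I_n -> V}) : {ffun 'I_n -> V} :=
  rule x [set i in chosen rho x s] s.

Definition traj (rho : R) (x : X) (t : nat) : {ffun 'I_n -> V} :=
  iter t (step rho x) (init x).

(* first time a locally optimal solution is reached; since the dynamics is
   deterministic on the finite set of solutions, if it terminates at all it
   does so within #|solutions| steps *)
Definition stop_time (rho : R) (x : X) : nat :=
  find (fun t => locopt x (traj rho x t)) (iota 0 (#|{: {ffun 'I_n -> V}}|).+1).

Definition output (rho : R) (x : X) : {ffun 'I_n -> V} :=
  traj rho x (stop_time rho x).

Definition on_traj (rho : R) (x : X) (t : nat) : Prop :=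
  forall t', (t' < t)%N -> ~~ locopt x (traj rho x t').

End LocalSearch.

Definition score_symmetric (A : eqType) (sigma : R -> seq A -> R) : Prop :=
  forall rho (c c' : seq A), perm_eq c c' -> sigma rho c = sigma rho c'.

Definition score_continuous (A : eqType) (I : R -> Prop)
    (sigma : R -> seq A -> R) : Prop :=
  forall (c : seq A) rho0, I rho0 ->
    limit1_in (fun rho => sigma rho c) I (sigma rho0 c) rho0.

Definition kappa_crossing (A : eqType) (I : R -> Prop) (sigma : R -> seq A -> R)
    (k kappa : nat) : Prop :=
  forall c c' : seq A, size c = size c' -> (size c <= k)%N -> ~~ perm_eq c c' ->
    exists L : seq R, (size L <= kappa)%N /\
      forall rho, I rho -> sigma rho c = sigma rho c' -> List.In rho L.

Definition beta_bounded (X : Type) (n : nat) (V : finType) (A : eqType)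
    (attr : X -> {ffun 'I_n -> V} -> 'I_n -> A) (sigma : R -> seq A -> R)
    (rule : X -> {set 'I_n} -> {ffun 'I_n -> V} -> {ffun 'I_n -> V})
    (init : X -> {ffun 'I_n -> V}) (locopt : X -> {ffun 'I_n -> V} -> bool)
    (k beta : nat) (I : R -> Prop) : Prop :=
  forall (x : X) (K : {set 'I_n}), (#|K| <= k)%N ->
    exists L : seq (seq A), (size L <= beta)%N /\
      forall rho t, I rho -> on_traj attr sigma rule init locopt k rho x t ->
        exists2 c, c \in L &
          perm_eq c [seq attr x (traj attr sigma rule init k rho x t) i | i <- enum K].

(* the (injectively indexed) set {xs i} is shattered by {h rho | I rho} *)
Definition shatters (X : Type) (I : R -> Prop) (h : R -> X -> R)
    (m : nat) (xs : 'I_m -> X) : Prop :=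
  injective xs /\
  exists r : 'I_m -> R, forall T : {set 'I_m},
    exists rho, I rho /\ forall i, Rlt (r i) (h rho (xs i)) <-> i \in T.

(* For a fixed instance x, a run of the heuristic depends on rho only through
   the relative order of the scores sigma(rho, c) of the at most n^k beta
   attribute multisets c that a k-set of objects can take along a run.  Two such
   scores can only change order at one of their at most kappa crossing points
   (intermediate value theorem), so the output on x is constant between
   consecutive points of a set of at most (n^k beta)^2 kappa breakpoints.  On m
   instances this leaves at most 2 m (n^k beta)^2 kappa + 1 behaviours, while
   shattering needs 2^m of them; hence m = O(k log (kappa beta n)). *)

From Pilot Require Import Defs.
From Stdlib Require Import Reals Lra Lia ClassicalEpsilon.
From mathcomp Require Import all_boot zify.

Set Implicit Arguments.
Unset Strict Implicit.
Unset Printing Implicit Defensive.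

Lemma mem_ksubs (T : eqType) (l : seq T) k K :
  K \in ksubs l k -> subseq K l /\ size K = k.
Proof.
elim: l k K => [|x l IH] [|k] K //=; rewrite ?inE.
- by move=> /eqP ->.
- by move=> /eqP ->.
- rewrite mem_cat => /orP[/mapP[K' /IH[subK' <-] ->]|/IH[subK <-]] /=.
  + by rewrite eqxx subK'.
  + by split=> //; exact: subseq_trans subK (subseq_cons l x).
Qed.

Lemma size_ksubs (T : Type) (l : seq T) k : (size (ksubs l k) <= size l ^ k)%N.
Proof.
elim: l k => [|x l IH] [|k] //=.
rewrite size_cat size_map expnS.
apply: leq_trans (leq_add (IH k) (IH k.+1)) _.
rewrite expnS -{1}(mul1n (size l ^ k)) -mulnDl add1n leq_mul2l.
by case: k {IH} => [|k]; rewrite ?expn0 ?leq_exp2r ?leqnSn ?orbT.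
Qed.

Lemma first_argmax_order_equiv (T : eqType) (P : T -> Prop) (f g : T -> R) x0 s :
  (forall a b, P a -> P b -> (Rlt (f a) (f b) <-> Rlt (g a) (g b))) ->
  P x0 -> (forall y, y \in s -> P y) ->
  first_argmax f x0 s = first_argmax g x0 s.
Proof.
rewrite /first_argmax => fg; elim: s x0 => [|y s IH] x0 //= Px0 Ps.
have Py : P y by apply: Ps; rewrite mem_head.
have -> : (if Rlt_dec (f x0) (f y) then y else x0) =
          (if Rlt_dec (g x0) (g y) then y else x0).
  have [fg_xy gf_xy] := fg _ _ Px0 Py.
  by case: Rlt_dec => fxy; case: Rlt_dec => gxy //; [case: gxy | case: fxy]; auto.
apply: IH => [|z z_s]; first by case: Rlt_dec.
by apply: Ps; rewrite inE z_s orbT.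
Qed.

Lemma size_flatten_map_count (T : eqType) (U : Type) (F : T -> seq U) (p : pred T) s b :
  (forall x, x \in s -> p x -> (size (F x) <= b)%N) ->
  (forall x, ~~ p x -> F x = [::]) ->
  (size (flatten (map F s)) <= count p s * b)%N.
Proof.
move=> Fp Fnp; elim: s Fp => [|x s IH] Fp //=.
rewrite size_cat mulnDl; case px: (p x) => /=.
- rewrite mul1n leq_add ?Fp ?mem_head // IH // => y y_s.
  by apply: Fp; rewrite inE y_s orbT.
- rewrite Fnp ?px // IH // => y y_s.
  by apply: Fp; rewrite inE y_s orbT.
Qed.

Lemma size_flatten_map_le (T : eqType) (U : Type) (F : T -> seq U) s b :
  (forall x, x \in s -> (size (F x) <= b)%N) -> (size (flatten (map F s)) <= size s * b)%N.
Proof.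
move=> Fs; rewrite -(count_predT s).
by apply: size_flatten_map_count => // x x_s _; apply: Fs.
Qed.

Lemma count_le_size_pred (T : eqType) (p : pred T) s x :
  x \in s -> ~~ p x -> (count p s <= (size s).-1)%N.
Proof.
move=> x_s npx; have := count_predC p s.
have : (0 < count (predC p) s)%N by rewrite -has_count; apply/hasP; exists x.
lia.
Qed.

Lemma count_lt_witness (T : Type) (p q : pred T) s x :
  subpred p q -> List.In x s -> q x -> ~~ p x -> (count p s < count q s)%N.
Proof.
move=> pq; elim: s => [|y s IH] //= [<-|x_s] qx npx.
- by rewrite (negbTE npx) qx add0n add1n ltnS sub_count.
- have := IH x_s qx npx.
  by case: (p y) (pq y) => [/(_ isT) -> | _] /=; [|case: (q y)] => /=; lia.
Qed.

Lemma find_eq_prefix (p p' : pred nat) a m :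
  (forall t, (t <= a + find p (iota a m))%N -> p t = p' t) ->
  find p' (iota a m) = find p (iota a m).
Proof.
elim: m a => [|m IH] a pp' //=.
case pa: (p a); first by rewrite -pp' ?pa // leq_addr.
rewrite -pp' ?pa ?leq_addr //; congr S; apply: IH => t le_t; apply: pp'.
by rewrite /= pa; lia.
Qed.

Lemma In_flatten_map (T : eqType) (U : Type) (F : T -> seq U) s x z :
  x \in s -> List.In z (F x) -> List.In z (flatten (map F s)).
Proof.
elim: s => [|y s IH] //=; rewrite inE => /orP[/eqP<-|x_s] z_Fx; apply: List.in_or_app.
- by left.
- by right; apply: IH.
Qed.

Lemma exp2_le_mul_exp2 m a : (2 ^ m <= 3 * m * 2 ^ a)%N -> (m <= 2 * a + 9)%N.
Proof.
move=> le_m; rewrite leqNgt; apply/negP => lt_m.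
pose d := (m - (2 * a + 10))%N.
have em : m = (a + (a + 10 + d))%N by rewrite /d; lia.
move: le_m; rewrite em expnD mulnC leq_pmul2r ?expn_gt0 // => le_m.
have lt_d : (a + d < 2 ^ (a + d))%N by apply: ltn_expl.
have : (2 ^ (a + 10 + d) = 1024 * 2 ^ (a + d))%N.
  by rewrite -addnA [(10 + d)%N]addnC addnA expnD mulnC.
lia.
Qed.

Lemma pow_le_exp2_trunc_log Q e : (1 < Q)%N -> (Q ^ e <= 2 ^ (2 * e * trunc_log 2 Q))%N.
Proof.
move=> Q_gt1; set q := trunc_log 2 Q.
have q_gt0 : (0 < q)%N by rewrite trunc_log_gt0.
apply: leq_trans (_ : (2 ^ q.+1) ^ e <= _)%N.
  by case: e => [|e]; rewrite ?expn0 // leq_exp2r // ltnW // trunc_log_ltn.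
rewrite -expnM leq_exp2l // -mulnA mulnCA (mulnC q.+1) leq_mul2l.
by rewrite mul2n -addnn -add1n leq_add2r q_gt0 orbT.
Qed.

Lemma leq_sq_expn_mul n k beta kappa : (0 < k)%N -> (0 < beta)%N -> (0 < kappa)%N ->
  ((n ^ k * beta) ^ 2 * kappa <= (kappa * beta * n) ^ (2 * k))%N.
Proof.
move=> k_gt0 beta_gt0 kappa_gt0.
have le_beta : (beta ^ 2 <= beta ^ (2 * k))%N by rewrite leq_pexp2l // leq_pmulr.
have le_kappa : (kappa <= kappa ^ (2 * k))%N.
  by rewrite -{1}(expn1 kappa) leq_pexp2l // muln_gt0.
rewrite !expnMn -expnM (mulnC k) [X in (_ <= X)%N]mulnC mulnA.
by rewrite [X in (_ <= X)%N]mulnAC leq_mul // leq_mul.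
Qed.

Local Open Scope R_scope.

Definition Rltb (a b : R) : bool := if Rlt_dec a b then true else false.
Definition Rleb (a b : R) : bool := if Rle_dec a b then true else false.

Lemma RltbP a b : reflect (a < b) (Rltb a b).
Proof. by rewrite /Rltb; case: Rlt_dec => h; constructor. Qed.

Lemma RlebP a b : reflect (a <= b) (Rleb a b).
Proof. by rewrite /Rleb; case: Rle_dec => h; constructor. Qed.

Definition clamp (a b y : R) : R := Rmin b (Rmax a y).

Lemma clamp_in a b y : a <= b -> a <= clamp a b y <= b.
Proof. by move=> ab; rewrite /clamp /Rmin /Rmax; repeat case: Rle_dec; lra. Qed.

Lemma clamp_id a b y : a <= y <= b -> clamp a b y = y.
Proof. by move=> ayb; rewrite /clamp /Rmin /Rmax; repeat case: Rle_dec; lra. Qed.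

Lemma clamp_lipschitz a b x y :
  a <= b -> Rabs (clamp a b y - clamp a b x) <= Rabs (y - x).
Proof. by move=> ab; rewrite /clamp /Rmin /Rmax; repeat case: Rle_dec; split_Rabs; lra. Qed.

(* [f] is only continuous within [I]; composing with [clamp a b] extends it
   to a function continuous on the whole line, where the Stdlib IVT applies. *)
Lemma IVT_interval (I : R -> Prop) (f : R -> R) a b :
  is_interval I -> (forall r, I r -> limit1_in f I (f r) r) ->
  I a -> I b -> a <= b -> f a < 0 -> 0 < f b ->
  exists z, I z /\ a <= z <= b /\ f z = 0.
Proof.
move=> I_interval f_cont Ia Ib ab fa fb.
have I_clamp y : I (clamp a b y) := I_interval a b _ Ia Ib (clamp_in y ab).
have ab' : a < b by case: (Rle_lt_or_eq_dec _ _ ab) => // eab; subst; lra.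
have cont : continuity (fun y => f (clamp a b y)).
  move=> x eps eps_gt0; have [alp [alp_gt0 H]] := f_cont _ (I_clamp x) eps eps_gt0.
  exists alp; split=> // y [_ xy]; apply: H; split; first exact: I_clamp.
  move: xy; rewrite /dist /= /R_dist => xy.
  by have := clamp_lipschitz x y ab; lra.
have [z [zab fz]] := IVT _ a b cont ab'
  ltac:(by rewrite /= clamp_id; lra) ltac:(by rewrite /= clamp_id; lra).
exists z; split; first exact: I_interval a b z Ia Ib zab.
by rewrite clamp_id in fz.
Qed.

Lemma no_root_sign_stable (I : R -> Prop) (f : R -> R) a b :
  is_interval I -> (forall r, I r -> limit1_in f I (f r) r) ->
  I a -> I b -> a <= b -> (forall z, I z -> a <= z <= b -> f z <> 0) ->
  (f a < 0 <-> f b < 0).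
Proof.
move=> I_interval f_cont Ia Ib ab no_root.
have fa0 := no_root a Ia (conj (Rle_refl a) ab).
have fb0 := no_root b Ib (conj ab (Rle_refl b)).
have opp_cont r : I r -> limit1_in (fun x => - f x) I (- f r) r.
  by move=> Ir; apply: limit_Ropp; apply: f_cont.
split=> sgn; apply: Rnot_le_lt => sgn'.
- have [z [Iz [zab fz]]] := IVT_interval I_interval f_cont Ia Ib ab sgn ltac:(lra).
  exact: no_root z Iz zab fz.
- have [z [Iz [zab fz]]] :=
    IVT_interval (f := fun x => - f x) I_interval opp_cont Ia Ib ab ltac:(lra) ltac:(lra).
  by apply: (no_root z Iz zab); lra.
Qed.

Definition cell (B : seq R) (rho : R) : nat :=
  (count (Rltb^~ rho) B + count (Rleb^~ rho) B)%N.

Lemma cell_le (B : seq R) rho : (cell B rho <= 2 * size B)%N.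
Proof. by rewrite /cell mul2n -addnn leq_add ?count_size. Qed.

Lemma cell_lt_breakpoint (B : seq R) rho rho' z :
  rho < rho' -> List.In z B -> rho <= z <= rho' -> (cell B rho < cell B rho')%N.
Proof.
move=> lt_rho z_B [rho_z z_rho'].
have le_lt : (count (Rleb^~ rho) B <= count (Rltb^~ rho') B)%N.
  by apply: sub_count => b /RlebP b_rho; apply/RltbP; lra.
have lt_le : (count (Rltb^~ rho) B < count (Rleb^~ rho') B)%N.
  apply: count_lt_witness z_B _ _.
  - by move=> b /RltbP b_rho; apply/RlebP; lra.
  - by apply/RlebP.
  - by apply/RltbP; lra.
rewrite /cell; lia.
Qed.

Lemma same_cell_no_breakpoint (B : seq R) rho rho' :
  rho < rho' -> cell B rho = cell B rho' -> forall z, rho <= z <= rho' -> ~ List.In z B.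
Proof.
by move=> lt_rho same z z_rho z_B; move: (cell_lt_breakpoint lt_rho z_B z_rho); rewrite same ltnn.
Qed.

(* Shattering needs [2 ^ m] parameters with pairwise different behaviour, but a
   family constant between consecutive breakpoints has at most
   [2 * size B + 1] behaviours. *)
Lemma shatters_piecewise_constant (Y : Type) (I : R -> Prop) (h : R -> Y -> R)
    (B : seq R) m (xs : 'I_m -> Y) :
  (forall rho rho' i, I rho -> I rho' -> rho < rho' ->
     (forall z, rho <= z <= rho' -> ~ List.In z B) -> h rho (xs i) = h rho' (xs i)) ->
  shatters I h xs -> (2 ^ m <= (2 * size B).+1)%N.
Proof.
move=> h_const [_ [r shattered]].
pose witness (T : {set 'I_m}) := epsilon (inhabits 0)
  (fun rho => I rho /\ forall i, r i < h rho (xs i) <-> i \in T).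
have witnessP T : I (witness T) /\ _ := epsilon_spec _ _ (shattered T).
pose code T : 'I_(2 * size B).+1 := inord (cell B (witness T)).
have code_inj : injective code.
  move=> T T' /(congr1 val); rewrite /= !inordK ?ltnS ?cell_le // => same_cell.
  have [IT T_P] := witnessP T; have [IT' T'_P] := witnessP T'.
  have same_h i : h (witness T) (xs i) = h (witness T') (xs i).
    case: (Rtotal_order (witness T) (witness T')) => [lt|[-> //|gt]].
    - exact/h_const/same_cell_no_breakpoint.
    - by symmetry; apply/h_const/same_cell_no_breakpoint.
  apply/setP => i; apply/idP/idP => [iT|iT'].
  - by apply/T'_P; rewrite -same_h; apply/T_P.
  - by apply/T_P; rewrite same_h; apply/T'_P.
have := leq_card code code_inj.
by rewrite card_ord -cardsT -powersetT card_powerset cardsT card_ord.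
Qed.

Lemma expn_Nat_pow a b : expn a b = Nat.pow a b.
Proof. by elim: b => [|b IH] //; rewrite expnS IH. Qed.

Lemma ln_le a b : 0 < a -> a <= b -> ln a <= ln b.
Proof.
move=> a_gt0 /Rle_lt_or_eq_dec[lt_ab|->]; last exact: Rle_refl.
by left; apply: ln_increasing.
Qed.

Lemma ln_INR_ge0 q : 0 <= ln (INR q).
Proof.
case: q => [|q].
  by rewrite INR_0 /ln; case: Rlt_dec => [/Rlt_irrefl[]|_]; apply: Rle_refl.
by rewrite -ln_1; apply: ln_le; rewrite ?S_INR; have := pos_INR q; lra.
Qed.

Lemma trunc_log2_le_ln Q : (0 < Q)%N -> INR (trunc_log 2 Q) <= 2 * ln (INR Q).
Proof.
move=> Q_gt0; set q := trunc_log 2 Q.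
have two : INR 2 = 2 by rewrite S_INR INR_1; lra.
have pow_le : 2 ^ q <= INR Q.
  by rewrite -two -pow_INR -expn_Nat_pow; apply/le_INR/ssrnat.leP/trunc_logP.
have : INR q * ln 2 <= ln (INR Q).
  by rewrite -ln_pow; [apply: ln_le pow_le; apply: pow_lt | ]; lra.
have := ln_lt_2; have := pos_INR q; nra.
Qed.

Lemma shattering_size_bound m k kappa beta n :
  (0 < k)%N ->
  (2 ^ m <= (2 * (m * (n ^ k * beta * ((n ^ k * beta).-1 * kappa)))).+1)%N ->
  INR m <= 34 * INR k * ln (INR (kappa * beta * n)).
Proof.
move=> k_gt0; case: m => [|m] le_m.
  by rewrite INR_0; apply: Rmult_le_pos (ln_INR_ge0 _); have := pos_INR k; lra.
set M := m.+1 in le_m *; set N := (n ^ k * beta)%N in le_m.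
set Q := (kappa * beta * n)%N; set q := trunc_log 2 Q.
have P_gt0 : (0 < N * (N.-1 * kappa))%N.
  rewrite lt0n; apply/negP => /eqP P0; move: le_m.
  by rewrite P0 muln0 expnS; have := expn_gt0 2 m; lia.
have /and3P[N_gt0 N_gt1 kappa_gt0] : [&& 0 < N, 0 < N.-1 & 0 < kappa]%N.
  by rewrite -!muln_gt0.
have /andP[n_gt0 beta_gt0] : ((0 < n) && (0 < beta))%N.
  by move: N_gt0; rewrite /N muln_gt0 expn_gt0 gtn_eqF ?orbF.
have Q_gt1 : (1 < Q)%N.
  case: (ltngtP n 1) => [|n_gt1|n1]; first by rewrite ltnNge n_gt0.
  - by apply: leq_trans n_gt1 _; rewrite leq_pmull // muln_gt0 kappa_gt0.
  - move: N_gt1; rewrite /N /Q n1 exp1n mul1n muln1 => beta_gt1.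
    by apply: leq_trans (_ : 1 < beta)%N _; [lia | rewrite leq_pmull].
have P_le : (N * (N.-1 * kappa) <= 2 ^ (2 * (2 * k) * q))%N.
  apply: leq_trans (pow_le_exp2_trunc_log (2 * k) Q_gt1).
  apply: leq_trans (leq_sq_expn_mul n k_gt0 beta_gt0 kappa_gt0).
  by rewrite -mulnn -mulnA leq_mul2l leq_mul2r leq_pred !orbT.
have le_M : (M <= 2 * (2 * (2 * k) * q) + 9)%N.
  apply: exp2_le_mul_exp2; rewrite -mulnA.
  have : (M * (N * (N.-1 * kappa)) <= M * 2 ^ (2 * (2 * k) * q))%N.
    by rewrite leq_mul2l P_le orbT.
  have : (0 < M * (N * (N.-1 * kappa)))%N by rewrite muln_gt0 P_gt0.
  move: le_m; set X := (M * _)%N; set Y := (M * _)%N; set Z := (2 ^ M)%N; lia.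
have kq_gt0 : (0 < k * q)%N by rewrite muln_gt0 k_gt0 trunc_log_gt0.
have {le_M} : (M <= 17 * (k * q))%N by move: le_M kq_gt0; rewrite !mulnA; lia.
move=> /ssrnat.leP/le_INR; rewrite mult_INR (mult_INR k) INR_IZR_INZ /= => le_M.
have := Rmult_le_compat_l _ _ _ (pos_INR k) (trunc_log2_le_ln (ltnW Q_gt1)).
rewrite -/q; lra.
Qed.

Section LocalSearchStability.
Variables (X : Type) (n : nat) (V : finType) (A : eqType)
  (attr : X -> {ffun 'I_n -> V} -> 'I_n -> A) (sigma : R -> seq A -> R)
  (rule : X -> {set 'I_n} -> {ffun 'I_n -> V} -> {ffun 'I_n -> V})
  (init : X -> {ffun 'I_n -> V}) (locopt : X -> {ffun 'I_n -> V} -> bool)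
  (k kappa beta : nat) (I : R -> Prop).
Hypotheses (I_interval : is_interval I) (sigma_sym : score_symmetric sigma)
  (sigma_cont : score_continuous I sigma)
  (sigma_crossing : kappa_crossing I sigma k kappa)
  (rule_bounded : beta_bounded attr sigma rule init locopt k beta I).

Local Notation traj := (traj attr sigma rule init k).
Local Notation step := (step attr sigma rule k).
Local Notation on_traj := (on_traj attr sigma rule init locopt k).
Local Notation output := (output attr sigma rule init locopt k).
Local Notation stop_time := (stop_time attr sigma rule init locopt k).

Definition k_subsets : seq (seq 'I_n) := ksubs (enum 'I_n) k.

Lemma k_subsetsP K :
  K \in k_subsets -> [/\ uniq K, size K = k & #|[set i in K]| = k].
Proof.
move=> /mem_ksubs[subK sizeK].
have uniqK : uniq K := subseq_uniq subK (enum_uniq _).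
by split=> //; rewrite cardsE; move/card_uniqP: uniqK => ->.
Qed.

Definition covers_attributes x (K : {set 'I_n}) (L : seq (seq A)) : Prop :=
  forall rho t, I rho -> on_traj rho x t ->
    exists2 c, c \in L & perm_eq c [seq attr x (traj rho x t) i | i <- enum K].

Definition attribute_sets x (K : {set 'I_n}) : seq (seq A) :=
  epsilon (inhabits [::]) (fun L => (size L <= beta)%N /\ covers_attributes x K L).

Lemma attribute_setsP x (K : {set 'I_n}) : (#|K| <= k)%N ->
  (size (attribute_sets x K) <= beta)%N /\ covers_attributes x K (attribute_sets x K).
Proof. by move=> cardK; exact: epsilon_spec (rule_bounded x cardK). Qed.

Definition profiles x : seq (seq A) :=
  flatten [seq attribute_sets x [set i in K] | K <- k_subsets].

Lemma size_profiles x : (size (profiles x) <= n ^ k * beta)%N.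
Proof.
apply: leq_trans (size_flatten_map_le (b := beta) _) _.
- move=> K /k_subsetsP[_ _ cardK].
  by case: (attribute_setsP x (K := [set i in K])); rewrite ?cardK.
- rewrite leq_mul2r; apply/orP; right.
  by have := size_ksubs (enum 'I_n) k; rewrite size_enum_ord.
Qed.

Lemma profiles_complete x rho t K : I rho -> on_traj rho x t -> K \in k_subsets ->
  exists2 c, c \in profiles x & perm_eq c (map (attr x (traj rho x t)) K).
Proof.
move=> Irho on_t K_sub; have [uniqK _ cardK] := k_subsetsP K_sub.
have [_ cover] := attribute_setsP x (K := [set i in K]) ltac:(by rewrite cardK).
have [c c_L c_perm] := cover rho t Irho on_t.
exists c; first by apply/flatten_mapP; exists K.
apply: perm_trans c_perm (perm_map _ _).
by apply: uniq_perm (enum_uniq _) uniqK _ => i; rewrite mem_enum inE.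
Qed.

Definition same_order rho rho' x : Prop :=
  forall c c', c \in profiles x -> c' \in profiles x -> size c = k -> size c' = k ->
    (sigma rho c < sigma rho c' <-> sigma rho' c < sigma rho' c').

Lemma step_same_order rho rho' x t : I rho -> same_order rho rho' x ->
  on_traj rho x t -> step rho x (traj rho x t) = step rho' x (traj rho x t).
Proof.
move=> Irho same on_t; rewrite /Defs.step /chosen -/k_subsets.
have size_sub K : K \in k_subsets -> size K = k by case/k_subsetsP.
have complete K := @profiles_complete x rho t K Irho on_t.
case: k_subsets complete size_sub => [|K0 Ks] // complete size_sub.
suff -> : first_argmax (score attr sigma rho x (traj rho x t)) K0 Ks =
          first_argmax (score attr sigma rho' x (traj rho x t)) K0 Ks by [].
apply: (first_argmax_order_equiv (P := fun K => K \in K0 :: Ks)).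
- move=> K K' K_sub K'_sub.
  have [c c_prof c_perm] := complete K K_sub.
  have [c' c'_prof c'_perm] := complete K' K'_sub.
  rewrite /score -(sigma_sym rho c_perm) -(sigma_sym rho' c_perm)
    -(sigma_sym rho c'_perm) -(sigma_sym rho' c'_perm).
  apply: same => //.
  + by rewrite (perm_size c_perm) size_map size_sub.
  + by rewrite (perm_size c'_perm) size_map size_sub.
- exact: mem_head.
- by move=> K K_sub; rewrite inE K_sub orbT.
Qed.

Lemma traj_same_order rho rho' x t : I rho -> same_order rho rho' x ->
  on_traj rho x t -> traj rho x t = traj rho' x t.
Proof.
move=> Irho same; elim: t => [|t IH] on_t //.
have on_t' : on_traj rho x t by move=> t' lt_t'; apply/on_t/ltnW.
by rewrite /Defs.traj !iterS -/(traj rho x t) -/(traj rho' x t) -IH // (step_same_order Irho same on_t').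
Qed.

Lemma on_traj_stop_time rho x : on_traj rho x (stop_time rho x).
Proof.
move=> t'; rewrite /Defs.stop_time => lt_t'.
have lt_t'_size : (t' < (#|{: {ffun 'I_n -> V}}|).+1)%N.
  by apply: leq_trans lt_t' _; apply: leq_trans (find_size _ _) _; rewrite size_iota.
by have := before_find 0%N lt_t'; rewrite nth_iota // add0n => ->.
Qed.

Lemma output_same_order rho rho' x : I rho -> same_order rho rho' x ->
  output rho x = output rho' x.
Proof.
move=> Irho same.
have traj_eq t : (t <= stop_time rho x)%N -> traj rho x t = traj rho' x t.
  move=> le_t; apply: traj_same_order => // t' lt_t'.
  exact/on_traj_stop_time/(leq_trans lt_t').
rewrite /Defs.output; have -> : stop_time rho' x = stop_time rho x.
  apply: find_eq_prefix => t le_t /=.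
  by rewrite traj_eq // -(add0n (stop_time rho x)).
by rewrite traj_eq.
Qed.

Definition distinct_profiles (c c' : seq A) : bool :=
  [&& size c == k, size c' == k & ~~ perm_eq c c'].

Definition crossing_points (c c' : seq A) : seq R :=
  epsilon (inhabits [::]) (fun L => (size L <= kappa)%N /\
    forall rho, I rho -> sigma rho c = sigma rho c' -> List.In rho L).

Lemma crossing_pointsP c c' : distinct_profiles c c' ->
  (size (crossing_points c c') <= kappa)%N /\
  forall rho, I rho -> sigma rho c = sigma rho c' -> List.In rho (crossing_points c c').
Proof.
case/and3P => /eqP size_c /eqP size_c' not_perm.
have same_size : size c = size c' by rewrite size_c size_c'.
exact: epsilon_spec (sigma_crossing same_size (eq_leq size_c) not_perm).
Qed.

Definition crossings_with x c : seq R :=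
  flatten [seq if distinct_profiles c c' then crossing_points c c' else [::] | c' <- profiles x].

Definition crossings x : seq R := flatten [seq crossings_with x c | c <- profiles x].

Lemma size_crossings_with x c :
  (size (crossings_with x c) <= count (distinct_profiles c) (profiles x) * kappa)%N.
Proof.
apply: size_flatten_map_count => [c' _ dist|c' /negbTE -> //].
by rewrite dist; case: (crossing_pointsP dist).
Qed.

Lemma size_crossings x :
  (size (crossings x) <= size (profiles x) * ((size (profiles x)).-1 * kappa))%N.
Proof.
apply: size_flatten_map_le => c c_prof.
apply: leq_trans (size_crossings_with x c) _; rewrite leq_mul2r.
by rewrite (count_le_size_pred c_prof) ?orbT // /distinct_profiles perm_refl !andbF.
Qed.

Lemma crossings_k0 x : k = 0%N -> crossings x = [::].
Proof.
move=> k0; apply/size0nil/eqP; rewrite -leqn0 -(muln0 (size (profiles x))).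
apply: size_flatten_map_le => c _.
apply: leq_trans (size_crossings_with x c) _.
rewrite leqn0 muln_eq0 -leqn0 leqNgt -has_count; apply/orP; left; apply/hasP.
by case=> c' _ /and3P[]; rewrite k0 => /nilP -> /nilP ->; rewrite perm_refl.
Qed.

Lemma same_order_no_crossing x rho rho' : I rho -> I rho' -> rho <= rho' ->
  (forall z, I z -> rho <= z <= rho' -> ~ List.In z (crossings x)) ->
  same_order rho rho' x.
Proof.
move=> Irho Irho' le_rho no_cross c c' c_prof c'_prof size_c size_c'.
have [perm_cc'|not_perm] := boolP (perm_eq c c').
  by rewrite (sigma_sym rho perm_cc') (sigma_sym rho' perm_cc'); split=> /Rlt_irrefl.
have dist : distinct_profiles c c' by rewrite /distinct_profiles size_c size_c' !eqxx.
have [_ crossing] := crossing_pointsP dist.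
have diff_cont r : I r ->
    limit1_in (fun r => sigma r c - sigma r c') I (sigma r c - sigma r c') r.
  by move=> Ir; apply: limit_minus; apply: sigma_cont.
have no_root z : I z -> rho <= z <= rho' -> sigma z c - sigma z c' <> 0.
  move=> Iz z_rho eq0; apply: (no_cross z Iz z_rho).
  apply: (In_flatten_map c_prof); apply: (In_flatten_map c'_prof).
  by rewrite dist; apply: crossing => //; lra.
have := no_root_sign_stable I_interval diff_cont Irho Irho' le_rho no_root.
by split=> ?; lra.
Qed.

Lemma output_stable x rho rho' : I rho -> I rho' -> rho <= rho' ->
  (forall z, I z -> rho <= z <= rho' -> ~ List.In z (crossings x)) ->
  output rho x = output rho' x.
Proof.
by move=> Irho Irho' le_rho no_cross; apply/output_same_order/same_order_no_crossing.
Qed.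

End LocalSearchStability.

Theorem mainTheorem3 :
  exists C : R,
  forall (X : Type) (n : nat) (V : finType) (A : eqType)
    (attr : X -> {ffun 'I_n -> V} -> 'I_n -> A)
    (sigma : R -> seq A -> R)
    (rule : X -> {set 'I_n} -> {ffun 'I_n -> V} -> {ffun 'I_n -> V})
    (init : X -> {ffun 'I_n -> V})
    (locopt : X -> {ffun 'I_n -> V} -> bool)
    (feasible : X -> {ffun 'I_n -> V} -> bool)
    (cost : X -> {ffun 'I_n -> V} -> R)
    (k kappa beta : nat) (I : R -> Prop),
    is_interval I ->
    (k <= n)%N ->
    (forall x, feasible x (init x)) ->
    (forall x (K : {set 'I_n}) s, feasible x s -> #|K| = k -> feasible x (rule x K s)) ->
    (forall x (K : {set 'I_n}) s i, i \notin K -> rule x K s i = s i) ->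
    (forall rho x, I rho -> exists t, locopt x (traj attr sigma rule init k rho x t)) ->
    score_symmetric sigma ->
    score_continuous I sigma ->
    kappa_crossing I sigma k kappa ->
    beta_bounded attr sigma rule init locopt k beta I ->
    forall (m : nat) (xs : 'I_m -> X),
      shatters I (fun rho x => cost x (output attr sigma rule init locopt k rho x)) xs ->
      Rle (INR m) (Rmult (Rmult C (INR k)) (ln (INR (kappa * beta * n)))).
Proof.
exists 34.
move=> X n V A attr sigma rule init locopt _ cost k kappa beta I I_interval _ _ _ _ _
  sigma_sym sigma_cont sigma_crossing rule_bounded m xs shattered.
pose B := flatten [seq crossings attr sigma rule init locopt k kappa beta I (xs i) | i <- enum 'I_m].
have cells : (2 ^ m <= (2 * size B).+1)%N.
  apply: shatters_piecewise_constant shattered => rho rho' i Irho Irho' lt_rho no_B.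
  congr (cost _ _); apply: (output_stable I_interval sigma_sym sigma_cont sigma_crossing
    rule_bounded Irho Irho' (Rlt_le _ _ lt_rho)) => z _ z_rho.
  move=> z_in; apply: (no_B z z_rho); rewrite /B.
  by apply: (In_flatten_map (x := i)); rewrite ?mem_enum.
have [k0|k_gt0] := posnP k.
  have B0 : size B = 0%N.
    apply/eqP; rewrite -leqn0 -(muln0 (size (enum 'I_m))).
    by apply: size_flatten_map_le => i _; rewrite crossings_k0.
  move: cells; rewrite B0 k0; case: m {xs shattered B B0} => [|m]; last by rewrite expnS; lia.
  by rewrite INR_0 !Rmult_0_r Rmult_0_l => _; exact: Rle_refl.
apply: shattering_size_bound k_gt0 (leq_trans cells _).
rewrite ltnS leq_mul2l -(size_enum_ord m); apply/orP; right.
apply: size_flatten_map_le => i _.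
apply: leq_trans (size_crossings _ _ _ _ _ sigma_crossing _) _.
have prof_le := size_profiles rule_bounded (xs i).
by rewrite leq_mul // leq_mul // -!subn1 leq_sub2r.
Qed.
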